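(* Let $m,n\geq2$ and let $V\subset[m]\times[n]$ with $|V|=m+n-1$. Then $V$ is a tree if and only if $\det(\mathfrak A(V))\neq0$.
   Context: Write $V=\phi(S)$ with $S=\{i_1<\dots<i_{m+n-1}\}\subset[mn]$, where $\phi(i)=(t,r)$ for $i=(t-1)n+r$, $t\in[m]$, $r\in[n]$. The structure matrix $\mathfrak A(V)=(a_{s,k})$ is the $(m+n-1)\times(m+n-1)$ matrix with, for $\phi(i_k)=(t,r)$: $a_{s,k}=1$ if $s=t<m$; $a_{s,k}=1$ if $s=m$; $a_{s,k}=1$ if $s=m+r<m+n$; $a_{s,k}=0$ otherwise. Graph notions on $[m]\times[n]$: distinct points adjacent iff they share a row or column; a circuit is a cyclic sequence $v_0,\dots,v_{s-1}$ ($s\ge4$) of pairwise distinct points $v_k=(i_k,j_k)$ with (indices mod $s$) $v_k,v_{k+1}$ adjacent and $(i_{k+2}-i_k)(j_{k+2}-j_k)\neq0$ for all $k$; a tree is a connected subset (any two points joined by a path of adjacent points in it) containing no circuit. *)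

From HB Require Import structures.
From mathcomp Require Import all_boot all_order all_algebra.
Set Implicit Arguments. Unset Strict Implicit. Unset Printing Implicit Defensive.
Import Order.TTheory GRing.Theory Num.Theory.

(* Points of [m] x [n] are encoded 0-based as 'I_m * 'I_n: (t, r) in the
   paper corresponds to (t-1, r-1) here. *)
Definition point (m n : nat) := ('I_m * 'I_n)%type.

Definition adjacent {m n} (a b : point m n) : bool :=
  (a != b) && ((a.1 == b.1) || (a.2 == b.2)).

Definition connected_set {m n} (V : {set point m n}) : Prop :=
  forall a b, a \in V -> b \in V ->
    exists p : seq (point m n),
      [/\ path adjacent a p, last a p = b & all (fun x => x \in V) p].

Definition circuit {m n} (V : {set point m n}) (c : seq (point m n)) : Prop :=
  match c with
  | [::] => False
  | x :: _ =>
      let s := size c in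
      [/\ 4 <= s, uniq c, all (fun y => y \in V) c,
          forall k, k < s -> adjacent (nth x c k) (nth x c ((k.+1) %% s))
        & forall k, k < s ->
            ((nth x c k).1 != (nth x c ((k.+2) %% s)).1) &&
            ((nth x c k).2 != (nth x c ((k.+2) %% s)).2)]
  end.

Definition is_tree {m n} (V : {set point m n}) : Prop :=
  connected_set V /\ ~ (exists c, circuit V c).

(* phi^{-1}(t, r) = (t-1) n + r, shifted to 0-based: t0 * n + r0 *)
Definition pindex {m n} (p : point m n) : nat := p.1 * n + p.2.

Definition sorted_pts {m n} (V : {set point m n}) : seq (point m n) :=
  sort (fun a b => pindex a <= pindex b) (enum V).

(* structure matrix A(V), rows/columns indexed 0-based:
   row s (paper's s+1), column k (paper's k+1) with phi(i_{k+1}) = (t0+1, r0+1):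
   entry 1 iff  s = t0 < m-1,  or s = m-1,  or s = m + r0 with r0 < n-1. *)
Definition struct_mx {m n} (V : {set point m n}) : 'M[int]_(m + n - 1) :=
  \matrix_(s < m + n - 1, k < m + n - 1)
    match nth None (map Some (sorted_pts V)) k with
    | None => 0%R
    | Some p =>
        if [|| (s == p.1 :> nat) && (p.1 < m.-1),
               s == m.-1 :> nat
             | (s == m + p.2 :> nat) && (p.2 < n.-1)]
        then 1%R else 0%R
    end.

From HB Require Import structures.
From mathcomp Require Import all_boot all_order all_algebra.
From mathcomp Require Import zify.
Import Order.TTheory GRing.Theory Num.Theory.

(* Read V as the edge set of a bipartite graph between the m rows and the
   n columns: circuits of V are the cycles of this graph.  The rows of A(V)
   are line sums (rows t < m, columns r < n, and the total), so a kernel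
   vector of A(V) is a weighting of V whose row and column sums all vanish.
   In its support every point has a partner on its row and on its column,
   and walking alternately along rows and columns closes up into a circuit;
   conversely, signs alternating around a circuit give such a weighting.
   A cokernel vector amounts to potentials a on rows and b on columns with
   b(n) = 0 and a(t) + b(r) = 0 for (t, r) in V; when V is disconnected, the
   indicator of the points not linked to column n provides one. *)

Set Implicit Arguments. Unset Strict Implicit. Unset Printing Implicit Defensive.

Lemma odd_succ_mod L k : ~~ odd L -> odd (k.+1 %% L) = ~~ odd k.
Proof. by move=> /negbTE evL; rewrite odd_mod. Qed.

Lemma alternating_sum_eq0 (R : pzRingType) L (h : 'I_L -> R) flag :
  ~~ odd L -> (forall k : 'I_L, odd k = flag -> h (ordS k) = h k) ->
  (\sum_(k < L) (-1) ^+ k * h k = 0)%R.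
Proof.
move=> evL hS; have oddS (k : 'I_L) : odd (ordS k) = ~~ odd k.
  by rewrite /= odd_succ_mod.
rewrite (bigID (fun k : 'I_L => odd k == flag)) /= addrC.
rewrite (reindex_inj (@ordS_inj L)) /=.
rewrite (eq_bigl (fun k : 'I_L => odd k == flag)); last first.
  by move=> k; rewrite oddS; case: (odd k); case: (flag).
rewrite -big_split big1 //= => k /eqP odd_k.
by rewrite hS // -[((-1) ^+ ordS k)%R]signr_odd oddS signrN signr_odd mulNr addNr.
Qed.

Lemma first_repeat (T : finType) (w : nat -> T) :
  exists i j, [/\ i < j, w i = w j & {in gtn j &, injective w}].
Proof.
pose repeats j := [exists i : 'I_j, w i == w j].
have rep : exists j, repeats j.
  have /injectivePn[a [b neq_ab wab]] :
      ~~ injectiveb (fun k : 'I_#|T|.+1 => w k).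
    apply/injectiveP => /leq_card; rewrite card_ord; lia.
  wlog lt_ab : a b neq_ab wab / a < b.
    move=> gen; case: (ltngtP a b) => [|lt_ba|/val_inj eq_ab]; first exact: gen.
      by apply: (gen b a) => //; rewrite eq_sym.
    by rewrite eq_ab eqxx in neq_ab.
  by exists b; apply/existsP; exists (Ordinal lt_ab); rewrite wab.
case: (ex_minnP rep) => j /existsP[i /eqP wij] minj.
exists i, j; split=> // a b; rewrite !inE => lt_aj lt_bj wab.
wlog lt_ab : a b lt_aj lt_bj wab / a < b.
  move=> gen; case: (ltngtP a b) => // [|lt_ba]; first exact: gen.
  by apply/esym/gen.
have : j <= b by apply: minj; apply/existsP; exists (Ordinal lt_ab); rewrite wab.
by rewrite leqNgt lt_bj.
Qed.

Lemma fiber_sums_eq0 (T : finType) (R : zmodType) K (f : T -> 'I_K)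
    (A : {pred T}) (Y : T -> R) :
  (\sum_(x in A) Y x = 0)%R ->
  (forall j : 'I_K, j < K.-1 -> (\sum_(x in A | f x == j) Y x = 0)%R) ->
  forall j, (\sum_(x in A | f x == j) Y x = 0)%R.
Proof.
move=> total low j; have [/low // | le_Kj] := ltnP j K.-1.
rewrite -[RHS]total [RHS](partition_big f xpredT) //= [RHS](bigD1 j) //=.
rewrite [X in (_ + X)%R]big1 ?addr0 // => i ne_ij.
by apply: low; move: ne_ij (ltn_ord i) (ltn_ord j); rewrite -val_eqE /=; lia.
Qed.

Lemma sum_delta (R : pzSemiRingType) K (u : nat -> R) X (C : bool) :
  (\sum_(s < K) u s * ((s == X :> nat) && C)%:R =
   if C && (X < K)%N then u X else 0)%R.
Proof.
case: C; last by rewrite big1 // => s _; rewrite andbF mulr0.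
have [lt_XK | le_KX] := ltnP X K; last first.
  rewrite big1 // => s _; rewrite andbT (_ : (s == X :> nat) = false) ?mulr0 //.
  by have := ltn_ord s; lia.
rewrite (bigD1 (Ordinal lt_XK)) //= eqxx mulr1 big1 ?addr0 // => s.
by rewrite -val_eqE /= => /negbTE->; rewrite mulr0.
Qed.

Section Circuits.
Variables m n : nat.
Implicit Types (p q r : point m n) (b : bool) (c : seq (point m n)).
Implicit Types (S V : {set point m n}).

Definition same_line b p q : bool := if b then p.1 == q.1 else p.2 == q.2.

Lemma same_line_refl b p : same_line b p p.
Proof. by case: b; rewrite /= eqxx. Qed.

Lemma same_line_sym b p q : same_line b p q = same_line b q p.
Proof. by case: b; rewrite /= eq_sym. Qed.

Lemma same_line_trans b q p r :
  same_line b p q -> same_line b q r -> same_line b p r.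
Proof. by case: b => /= /eqP -> /eqP ->. Qed.

Lemma adjacentE p q :
  adjacent p q = (p != q) && (same_line true p q || same_line false p q).
Proof. by []. Qed.

Lemma adjacent_sym p q : adjacent p q = adjacent q p.
Proof. by rewrite !adjacentE eq_sym !(same_line_sym _ p). Qed.

Lemma point_neqE p q : (p != q) = (p.1 != q.1) || (p.2 != q.2).
Proof. by case: p q => [a b] [c d]; rewrite xpair_eqE negb_and. Qed.

Lemma turn_apart b p q r : p != q -> same_line b p q ->
  q != r -> same_line (~~ b) q r -> (p.1 != r.1) && (p.2 != r.2).
Proof.
rewrite !point_neqE; case: b => /= pq /eqP e1 qr /eqP e2;
  by move: pq qr; rewrite e1 -e2 !eqxx ?orbF /= => -> ->.
Qed.

Definition alternating b0 (x : point m n) c :=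
  forall k, k < size c ->
    same_line (b0 (+) odd k) (nth x c k) (nth x c (k.+1 %% size c)).

Lemma circuit_of_alternating S b0 x c : 0 < size c -> ~~ odd (size c) ->
  uniq c -> {subset c <= S} -> alternating b0 x c -> circuit S c.
Proof.
case: c => [//|y c'] _; set c := y :: c'; set L := size c => evL uc cS alt.
have L_gt1 : 1 < L by move: evL; rewrite /L /=; case: (c').
have next_lt k : k.+1 %% L < L by rewrite ltn_mod.
have altE k : k < L ->
    same_line (b0 (+) odd k) (nth y c k) (nth y c (k.+1 %% L)).
  by move=> lt_k; rewrite !(set_nth_default x) //; exact: alt.
have neq_next k : k < L -> nth y c k != nth y c (k.+1 %% L).
  move=> lt_k; rewrite nth_uniq //; case: (ltnP k.+1 L) => [lt_k1 | le_Lk1].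
    by rewrite modn_small // neq_ltn ltnSn.
  have -> : k.+1 = L by lia.
  by rewrite modnn; lia.
have apart k : k < L ->
    ((nth y c k).1 != (nth y c (k.+2 %% L)).1) &&
    ((nth y c k).2 != (nth y c (k.+2 %% L)).2).
  move=> lt_k; have nextS : (k.+1 %% L).+1 %% L = k.+2 %% L.
    by rewrite -addn1 modnDml addn1.
  rewrite -nextS; apply: (turn_apart (neq_next _ lt_k) (altE _ lt_k)).
    exact: neq_next.
  by rewrite -addbN -(odd_succ_mod k evL); apply: altE.
split=> // [||k lt_k].
- have L_neq2 : L != 2 by apply: contraTneq (apart 0 isT) => ->; rewrite eqxx.
  have L_neq3 : L != 3 by apply: contraNneq evL => ->.
  lia.
- by apply/allP => z /cS.
- rewrite adjacentE neq_next //.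
  by case: (b0 (+) odd k) (altE _ lt_k) => ->; rewrite ?orbT.
Qed.

Lemma alternating_of_circuit S x c' : circuit S (x :: c') ->
  ~~ odd (size (x :: c')) /\ exists b0, alternating b0 x (x :: c').
Proof.
case; set c := x :: c'; set L := size c => L_ge4 _ _ adj apart.
pose row k := (nth x c k).1 == (nth x c (k.+1 %% L)).1.
have lineE k : k < L -> same_line (row k) (nth x c k) (nth x c (k.+1 %% L)).
  move=> lt_k; rewrite /same_line /row; case: ifP => // /negbT nrow.
  by move: (adj k lt_k); rewrite adjacentE /= (negbTE nrow) => /andP[].
have row_next k : k < L -> row (k.+1 %% L) = ~~ row k.
  move=> lt_k; have nextS : (k.+1 %% L).+1 %% L = k.+2 %% L.
    by rewrite -addn1 modnDml addn1.
  have lt_k1 : k.+1 %% L < L by rewrite ltn_mod; lia.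
  suff : row (k.+1 %% L) != row k by case: (row k); case: (row _).
  apply/eqP => same.
  have := lineE _ lt_k1; rewrite same nextS => /(same_line_trans (lineE k lt_k)).
  move: (apart k lt_k).
  by case/andP=> /negbTE d1 /negbTE d2; case: (row k); rewrite /= ?d1 ?d2.
have rowE k : k < L -> row k = row 0 (+) odd k.
  elim: k => [|k IH] lt_k; first by rewrite addbF.
  by rewrite -{1}(modn_small lt_k) row_next ?IH 1?ltnW //= addbN.
split; last by exists (row 0) => k lt_k; rewrite -rowE //; apply: lineE.
have lt_L1 : L.-1 < L by lia.
have := row_next _ lt_L1; rewrite prednK ?modnn; last by lia.
rewrite (rowE _ lt_L1) => flip; have L_gt0 : 0 < L by lia.
have odd_L1 : odd L.-1 by move: flip; case: (row 0); case: (odd L.-1).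
by rewrite -(prednK L_gt0) /= odd_L1.
Qed.

Lemma circuitS S V c : S \subset V -> circuit S c -> circuit V c.
Proof.
move=> /subsetP SV; case: c => [//|x c'] [? ? cS ? ?]; split=> //.
by apply: sub_all cS => z /SV.
Qed.

Lemma alternating_walk_circuit S (w : nat -> point m n) :
  (forall k, w k \in S) -> (forall k, w k.+1 != w k) ->
  (forall k, same_line (odd k) (w k) (w k.+1)) -> exists c, circuit S c.
Proof.
move=> w_in w_neq w_line.
have [i [j [lt_ij wij inj_w]]] := first_repeat w.
(* When [j - i] is odd, start at [w i.+1] instead: [w j.-1], [w j] = [w i]
   and [w i.+1] lie on one line, so the closing step keeps the alternation. *)
set i' := i + odd (j - i); set L := j - i'.
have j_neq_i1 : j != i.+1.
  by apply: contraTneq (w_neq i) => ji; rewrite -ji -wij eqxx.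
have L_gt0 : 0 < L by rewrite /L /i'; case: (odd (j - i)) => /=; lia.
have evL : ~~ odd L.
  have le_i'j : i' <= j by rewrite /i'; case: (odd _) => /=; lia.
  by rewrite /L oddB // /i' oddD oddb addbA -oddB ?(ltnW lt_ij) // addbb.
have nthE x k : k < L -> nth x (map w (iota i' L)) k = w (i' + k).
  by move=> lt_kL; rewrite (nth_map 0) ?size_iota ?nth_iota.
have closing : same_line (odd j.-1) (w j.-1) (w i').
  have j_gt0 : 0 < j by lia.
  have := w_line j.-1; rewrite prednK // -wij /i'.
  case: (boolP (odd (j - i))) => [odd_ji | _]; last by rewrite addn0.
  have -> : odd j.-1 = odd i.
    move: odd_ji; rewrite oddB ?(ltnW lt_ij) // -(prednK j_gt0) /=.
    by case: (odd j.-1); case: (odd i).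
  by move=> /same_line_trans; apply; rewrite addn1; apply: w_line.
exists (map w (iota i' L)).
apply: (@circuit_of_alternating S (odd i') (w i'));
  rewrite ?size_map ?size_iota //.
- rewrite map_inj_in_uniq ?iota_uniq // => a b; rewrite !mem_iota => ha hb.
  by apply: inj_w; rewrite inE /L in ha hb *; lia.
- by move=> _ /mapP[k _ ->].
move=> k; rewrite size_map size_iota => lt_kL; rewrite nthE // -oddD.
case: (ltnP k.+1 L) => [lt_k1L | le_Lk1].
  by rewrite modn_small // nthE // addnS.
have ->: k.+1 = L by lia.
have -> : i' + k = j.-1 by rewrite /L in le_Lk1 lt_kL; lia.
by rewrite modnn nthE // addn0.
Qed.

Lemma partnered_circuit S p0 :
  (forall b p, p \in S -> exists2 q, q \in S & (q != p) && same_line b p q) ->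
  p0 \in S -> exists c, circuit S c.
Proof.
move=> partner p0S.
pose step b p := odflt p [pick q in S | (q != p) && same_line b p q].
pose w k := iteri k (fun i => step (odd i)) p0.
have w_step k : w k \in S ->
    [&& w k.+1 \in S, w k.+1 != w k & same_line (odd k) (w k) (w k.+1)].
  rewrite /w iteriS /step; case: pickP => [q /andP[-> ->] //|none] wkS.
  have [q qS /andP[neq line]] := partner (odd k) _ wkS.
  by move: (none q); rewrite qS neq line.
have w_in k : w k \in S by elim: k => // k /w_step /and3P[].
apply: (alternating_walk_circuit w_in) => k;
  by case/and3P: (w_step k (w_in k)).
Qed.

End Circuits.

Section BalancedWeights.
Variables m n : nat.
Implicit Types (p q : point m n) (c : seq (point m n)) (V : {set point m n}).
Local Open Scope ring_scope.

Definition balanced {R : zmodType} V (Y : point m n -> R) :=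
  (forall t : 'I_m, \sum_(q in V | q.1 == t) Y q = 0) /\
  (forall r : 'I_n, \sum_(q in V | q.2 == r) Y q = 0).

Lemma balanced_line_sum (R : zmodType) V (Y : point m n -> R) b p :
  balanced V Y -> \sum_(q in V | same_line b p q) Y q = 0.
Proof.
case=> rows cols; case: b; [rewrite -[RHS](rows p.1) | rewrite -[RHS](cols p.2)];
  by apply: eq_bigl => q; rewrite /= eq_sym.
Qed.

Lemma balanced_partner (R : zmodType) V (Y : point m n -> R) b p :
  balanced V Y -> p \in V -> Y p != 0 ->
  exists2 q, q \in [set q in V | Y q != 0] & (q != p) && same_line b p q.
Proof.
move=> /(balanced_line_sum b p) line0 pV Yp; apply/exists_inP.
apply: contraNT Yp => /exists_inPn none; rewrite -line0 (bigD1 p) /=; last first.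
  by rewrite pV same_line_refl.
rewrite big1 ?addr0 // => q /andP[/andP[qV line] neq].
apply/eqP; apply: contraTT isT => Yq.
by have := none q; rewrite inE qV Yq neq line; apply.
Qed.

Definition circuit_sign {R : pzRingType} c p : R :=
  if p \in c then (-1) ^+ index p c else 0.

Lemma circuit_sign_sum {R : pzRingType} V c b (l : pred (point m n)) :
  circuit V c -> (forall p q, same_line b p q -> l p = l q) ->
  \sum_(q in V | l q) circuit_sign c q = 0 :> R.
Proof.
case: c => [//|x c'] circ l_line; set c := x :: c'.
have [evL [b0 alt]] := alternating_of_circuit circ.
case: circ => _ uc cV _ _.
transitivity (\sum_(q <- c) (l q)%:R * circuit_sign c q : R).
  rewrite big_uniq // big_mkcond [RHS]big_mkcond; apply: eq_bigr => q _.
  rewrite /circuit_sign; case: (boolP (q \in c)) => qc; last by rewrite /= !if_same.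
  by rewrite (allP cV q qc) /=; case: (l q); rewrite ?mul1r ?mul0r.
rewrite (big_nth x) big_mkord.
rewrite (eq_bigr (fun k : 'I_(size c) => (-1) ^+ k * (l (nth x c k))%:R)) => [|k _].
  apply: (alternating_sum_eq0 (flag := b0 (+) b)) => // k odd_k.
  have line : same_line b (nth x c k) (nth x c (k.+1 %% size c)).
    by have := alt k (ltn_ord k); rewrite odd_k addKb.
  by rewrite (l_line _ _ line).
by rewrite /circuit_sign mem_nth // index_uniq // mulr_natl mulr_natr.
Qed.

Lemma circuit_balanced {R : pzRingType} V c :
  circuit V c -> balanced V (circuit_sign c : point m n -> R).
Proof.
move=> circ; split=> [t|r].
- apply: (circuit_sign_sum (b := true) (l := fun q => q.1 == t) circ).
  by move=> p q /eqP ->.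
- apply: (circuit_sign_sum (b := false) (l := fun q => q.2 == r) circ).
  by move=> p q /eqP ->.
Qed.

Lemma exists_circuitP V :
  (exists c, circuit V c) <->
  exists2 Y : point m n -> int, balanced V Y & exists2 p, p \in V & Y p != 0.
Proof.
split=> [[[//|x c'] circ] | [Y balY [p pV Yp]]].
  exists (circuit_sign (x :: c')); first exact: circuit_balanced.
  exists x; first by case: circ => _ _ /andP[].
  by rewrite /circuit_sign mem_head /= eqxx expr0 oner_eq0.
have [c circ] : exists c, circuit [set q in V | Y q != 0] c.
  apply: (partnered_circuit (p0 := p)); last by rewrite inE pV.
  move=> b q; rewrite inE => /andP[qV Yq]; exact: balanced_partner.
by exists c; apply: circuitS circ; apply/subsetP => q; rewrite inE => /andP[].
Qed.

End BalancedWeights.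

Section StructureMatrix.
Variables (m n : nat) (V : {set point m n}).
Local Open Scope ring_scope.
Local Notation N := (m + n - 1)%N.
Local Notation pts := (sorted_pts V).

Lemma perm_sorted_pts : perm_eq pts (enum V).
Proof. by rewrite /sorted_pts perm_sort. Qed.

Lemma size_sorted_pts : size pts = #|V|.
Proof. by rewrite (perm_size perm_sorted_pts) cardE. Qed.

Lemma sorted_pts_uniq : uniq pts.
Proof. by rewrite (perm_uniq perm_sorted_pts) enum_uniq. Qed.

Lemma mem_sorted_pts : pts =i V.
Proof. by move=> p; rewrite (perm_mem perm_sorted_pts) mem_enum. Qed.

Definition struct_entry (s : nat) (p : point m n) : bool :=
  [|| (s == p.1 :> nat) && (p.1 < m.-1)%N, s == m.-1 :> nat
    | (s == m + p.2 :> nat) && (p.2 < n.-1)%N].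

Lemma struct_entry_row s p : (s < m.-1)%N -> struct_entry s p = (p.1 == s :> nat).
Proof. by rewrite /struct_entry; have := ltn_ord p.1; have := ltn_ord p.2; lia. Qed.

Lemma struct_entry_total p : struct_entry m.-1 p.
Proof. by rewrite /struct_entry eqxx orbT. Qed.

Lemma struct_entry_col r p :
  (r < n.-1)%N -> struct_entry (m + r) p = (p.2 == r :> nat).
Proof. by rewrite /struct_entry; have := ltn_ord p.1; have := ltn_ord p.2; lia. Qed.

Lemma struct_entry_split s p : nat_of_bool (struct_entry s p) =
  (((s == p.1 :> nat) && (p.1 < m.-1)) + (s == m.-1 :> nat) +
   ((s == m + p.2 :> nat) && (p.2 < n.-1)))%N.
Proof. by rewrite /struct_entry; have := ltn_ord p.1; have := ltn_ord p.2; lia. Qed.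

Lemma sum_struct_entry (u : nat -> int) p :
  \sum_(s < N) u s * (struct_entry s p)%:R =
  (if (p.1 < m.-1)%N then u p.1 else 0) + u m.-1 +
  (if (p.2 < n.-1)%N then u (m + p.2)%N else 0).
Proof.
have o1 := ltn_ord p.1; have o2 := ltn_ord p.2.
under eq_bigr => s _ do
  rewrite struct_entry_split !natrD !mulrDr -[s == m.-1 :> nat]andbT.
rewrite !big_split /= !sum_delta /=.
have -> : (p.1 < N)%N by lia.
have -> : (m.-1 < N)%N by lia.
have -> : (m + p.2 < N)%N = (p.2 < n.-1)%N by lia.
by rewrite andbT andbb.
Qed.

Hypotheses (m_gt0 : (0 < m)%N) (n_gt0 : (0 < n)%N) (card_V : #|V| = N).
Let x0 : point m n := (Ordinal m_gt0, Ordinal n_gt0).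

Lemma struct_mxE s k : struct_mx V s k = (struct_entry s (nth x0 pts k))%:R.
Proof.
by rewrite mxE (nth_map x0) ?size_sorted_pts ?card_V // /struct_entry; case: ifP.
Qed.

Lemma sum_sorted_pts (R : nmodType) (F : point m n -> R) :
  \sum_(k < N) F (nth x0 pts k) = \sum_(p in V) F p.
Proof.
transitivity (\sum_(p <- pts) F p); last first.
  by rewrite (perm_big _ perm_sorted_pts) big_enum.
by rewrite (big_nth x0) size_sorted_pts card_V big_mkord.
Qed.

Lemma struct_mx_kernel (Y : point m n -> int) :
  (forall s : 'I_N, \sum_(p in V) Y p * (struct_entry s p)%:R = 0) <-> balanced V Y.
Proof.
have indicator s (P : pred (point m n)) : (forall p, struct_entry s p = P p) ->
    \sum_(p in V) Y p * (struct_entry s p)%:R = \sum_(p in V | P p) Y p.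
  by move=> eP; rewrite big_mkcondr; apply: eq_bigr => p _; rewrite eP; case: (P p);
    rewrite ?mulr1 ?mulr0.
have rowE (t : 'I_m) : (t < m.-1)%N ->
    \sum_(p in V) Y p * (struct_entry t p)%:R = \sum_(p in V | p.1 == t) Y p.
  by move=> lt_t; apply: indicator => p; rewrite struct_entry_row.
have colE (r : 'I_n) : (r < n.-1)%N ->
    \sum_(p in V) Y p * (struct_entry (m + r) p)%:R = \sum_(p in V | p.2 == r) Y p.
  by move=> lt_r; apply: indicator => p; rewrite struct_entry_col.
have totalE : \sum_(p in V) Y p * (struct_entry m.-1 p)%:R = \sum_(p in V) Y p.
  rewrite (indicator _ xpredT) => [|p]; last by rewrite struct_entry_total.
  by apply: eq_bigl => p; rewrite andbT.
have lt_m1 : (m.-1 < N)%N by lia.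
split=> [kerY | [rows cols] s].
  have total := kerY (Ordinal lt_m1); rewrite totalE in total.
  split.
    apply: fiber_sums_eq0 => // t lt_t; have lt_tN : (t < N)%N by lia.
    by rewrite -rowE // (kerY (Ordinal lt_tN)).
  apply: fiber_sums_eq0 => // r lt_r; have lt_rN : (m + r < N)%N by lia.
  by rewrite -colE // (kerY (Ordinal lt_rN)).
have [lt_s | ge_s] := ltnP s m.-1.
  have lt_sm : (s < m)%N by lia.
  by rewrite (rowE (Ordinal lt_sm)) // rows.
have [eq_s | ne_s] := eqVneq (s : nat) m.-1.
  rewrite eq_s totalE (partition_big fst xpredT) //=.
  by apply: big1 => t _; apply: rows.
have lt_sN := ltn_ord s; have lt_r : (s - m < n)%N by lia.
have -> : (s : nat) = (m + Ordinal lt_r)%N by rewrite /=; lia.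
by rewrite colE ?cols //=; lia.
Qed.

Lemma struct_mx_det0P :
  \det (struct_mx V) = 0 <->
  exists2 Y : point m n -> int, balanced V Y & exists2 p, p \in V & Y p != 0.
Proof.
have mulE (v : 'rV_N) Y s : (forall k, v 0 k = Y (nth x0 pts k)) ->
    (v *m (struct_mx V)^T) 0 s = \sum_(p in V) Y p * (struct_entry s p)%:R.
  move=> vY; rewrite mxE -sum_sorted_pts; apply: eq_bigr => k _.
  by rewrite mxE vY struct_mxE.
have index_lt p : p \in V -> (index p pts < N)%N.
  by rewrite -mem_sorted_pts -index_mem size_sorted_pts card_V.
rewrite -det_tr; split=> [/eqP/det0P[v nz_v vA] | [Y balY [p pV Yp]]].
  pose Y p := oapp (v 0) 0 (insub (index p pts)).
  have vY k : v 0 k = Y (nth x0 pts k).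
    by rewrite /Y index_uniq ?sorted_pts_uniq ?size_sorted_pts ?card_V // valK.
  exists Y; first by apply/struct_mx_kernel => s; rewrite -(mulE v) // vA mxE.
  have [k vk] : exists k, v 0 k != 0.
    apply/existsP; apply: contraNT nz_v => /existsPn v0.
    by apply/eqP/rowP => k; rewrite mxE; apply/eqP/negPn/v0.
  exists (nth x0 pts k); rewrite -?vY //.
  by rewrite -mem_sorted_pts mem_nth ?size_sorted_pts ?card_V.
apply/eqP/det0P; exists (\row_k Y (nth x0 pts k)).
  apply: contraNneq Yp => /rowP/(_ (Ordinal (index_lt p pV))).
  by rewrite !mxE /= nth_index ?mem_sorted_pts // => ->.
apply/rowP => s; rewrite [RHS]mxE (mulE _ Y) => [|k]; last by rewrite mxE.
by case: (struct_mx_kernel Y) => _ /(_ balY).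
Qed.

Lemma struct_mx_det0_of_potential (a b : nat -> int) :
  b n.-1 = 0 -> (exists2 p, p \in V & a p.1 != 0) ->
  {in V, forall p : point m n, a p.1 + b p.2 = 0} -> \det (struct_mx V) = 0.
Proof.
move=> b_last [p0 p0V a_p0] ab0; apply/eqP/det0P.
(* [u] is chosen so that the entry of [u *m struct_mx V] at a point [p] of V
   is [a p.1 + b p.2]. *)
pose u s :=
  if (s < m.-1)%N then a s - a m.-1 else if s == m.-1 then a m.-1 else b (s - m)%N.
have lt_m1 : (m.-1 < N)%N by lia.
exists (\row_(s < N) u s).
  apply: contraNneq a_p0 => /rowP u0.
  have := u0 (Ordinal lt_m1); rewrite !mxE /u ltnn eqxx => a_last.
  have [lt_p0 | ge_p0] := ltnP p0.1 m.-1; last first.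
    by rewrite (_ : (p0.1 : nat) = m.-1) //; have := ltn_ord p0.1; lia.
  have lt_p0N : (p0.1 < N)%N by lia.
  by have := u0 (Ordinal lt_p0N); rewrite !mxE /u /= lt_p0 a_last subr0 => ->.
apply/rowP => k; rewrite [RHS]mxE mxE.
under eq_bigr => s _ do rewrite mxE struct_mxE.
set p := nth x0 pts k.
have pV : p \in V by rewrite -mem_sorted_pts mem_nth ?size_sorted_pts ?card_V.
rewrite sum_struct_entry /u ltnn eqxx -[RHS](ab0 p pV).
have o1 := ltn_ord p.1; have o2 := ltn_ord p.2.
have -> : (m + p.2 < m.-1)%N = false by lia.
have -> : (m + p.2 == m.-1) = false by lia.
have a_lastE : (m.-1 <= p.1)%N -> a p.1 = a m.-1 by move=> ?; congr a; lia.
have b_lastE : (n.-1 <= p.2)%N -> b p.2 = 0.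
  by move=> ?; rewrite -b_last; congr b; lia.
by case: ltnP => [lt1|/a_lastE->]; case: ltnP => [lt2|/b_lastE->];
  rewrite ?addKn ?subrK ?add0r ?addr0.
Qed.

End StructureMatrix.

Section Connectivity.
Variables (m n : nat) (V : {set point m n}).
Implicit Types (p q z : point m n) (P : pred (point m n)).

Definition adjacent_in : rel (point m n) :=
  [rel p q | [&& p \in V, q \in V & adjacent p q]].

Lemma adjacent_in_connect_sym : connect_sym adjacent_in.
Proof.
by apply: sym_connect_sym => p q; rewrite /adjacent_in /= adjacent_sym andbCA.
Qed.

Lemma connected_set_connect :
  {in V &, forall a b, connect adjacent_in a b} -> connected_set V.
Proof.
move=> conn a b aV bV; have /connectP[s pth ->] := conn a b aV bV.
exists s; split=> //; first by apply: sub_path pth => p q /and3P[].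
by elim: s a pth {aV bV} => //= q s IH a /andP[/and3P[_ -> _] /IH].
Qed.

Lemma line_meets_closed P b p :
  (forall p q, p \in V -> q \in V -> adjacent p q -> P p = P q) -> p \in V ->
  [exists q, [&& q \in V, P q & same_line b q p]] = P p.
Proof.
move=> closedP pV; apply/existsP/idP => [[q /and3P[qV Pq line]] | Pp].
  have [<- // | neq] := eqVneq q p.
  by rewrite -(closedP q p) // adjacentE neq; case: b line => ->; rewrite ?orbT.
by exists p; rewrite pV Pp same_line_refl.
Qed.

Hypotheses (m_gt0 : 0 < m) (n_gt0 : 0 < n) (card_V : #|V| = m + n - 1).
Local Open Scope ring_scope.

Lemma struct_mx_det0_of_closed P :
  (forall p q, p \in V -> q \in V -> adjacent p q -> P p = P q) ->
  (exists2 p, p \in V & P p) -> {in V, forall q, P q -> q.2 != n.-1 :> nat} ->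
  \det (struct_mx V) = 0.
Proof.
move=> closedP [p0 p0V Pp0] off_last.
pose a t : int := [exists q, [&& q \in V, P q & q.1 == t :> nat]]%:R.
pose b r : int := - [exists q, [&& q \in V, P q & q.2 == r :> nat]]%:R.
have aE p : p \in V -> a p.1 = (P p)%:R.
  by move=> pV; rewrite /a -(line_meets_closed true closedP pV).
have bE p : p \in V -> b p.2 = - (P p)%:R.
  by move=> pV; rewrite /b -(line_meets_closed false closedP pV).
apply: (struct_mx_det0_of_potential m_gt0 n_gt0 card_V (a := a) (b := b)).
- rewrite /b (_ : [exists q, _] = false) ?oppr0 //.
  apply/existsP => -[q /and3P[qV Pq /eqP last_q]].
  by move: (off_last q qV Pq); rewrite last_q eqxx.
- by exists p0; rewrite // aE // Pp0 oner_eq0.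
- by move=> p pV; rewrite aE // bE // addrN.
Qed.

Lemma struct_mx_connected : \det (struct_mx V) != 0 -> connected_set V.
Proof.
move=> det_ne0; apply: connected_set_connect => a b aV bV.
apply: contraTT det_ne0 => not_ab; rewrite negbK; apply/eqP.
pose linked p :=
  [exists z, [&& z \in V, z.2 == n.-1 :> nat & connect adjacent_in p z]].
apply: (@struct_mx_det0_of_closed (predC linked)) => //.
- move=> p q pV qV pq.
  have pq_in : adjacent_in p q by rewrite /adjacent_in /= pV qV.
  congr negb; apply: eq_existsb => z.
  by rewrite (same_connect1 adjacent_in_connect_sym pq_in).
- have [|?] := boolP (linked a); last by exists a.
  case/existsP=> za /and3P[zaV za_last a_za].
  have [|?] := boolP (linked b); last by exists b.
  case/existsP=> zb /and3P[zbV zb_last b_zb].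
  case/negP: not_ab; apply: connect_trans a_za _.
  rewrite adjacent_in_connect_sym; apply: connect_trans b_zb _.
  have [-> // | ne] := eqVneq zb za; apply: connect1.
  rewrite /adjacent_in /= zaV zbV adjacentE ne /=; apply/orP; right.
  by apply/eqP/val_inj; rewrite /= (eqP za_last) (eqP zb_last).
- move=> q qV; apply: contraNneq => last_q.
  by apply/existsP; exists q; rewrite qV last_q eqxx connect0.
Qed.

End Connectivity.

Unset Implicit Arguments.

Theorem theorem3p1 (m n : nat) (hm : 2 <= m) (hn : 2 <= n)
  (V : {set point m n}) (hV : #|V| = m + n - 1) :
  is_tree V <-> (\det (struct_mx V) != 0)%R.
Proof.
have m_gt0 : 0 < m := ltnW hm.
have n_gt0 : 0 < n := ltnW hn.
split=> [[_ no_circuit] | det_ne0].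
  by apply/eqP => /(struct_mx_det0P m_gt0 n_gt0 hV)/exists_circuitP.
split; first exact: struct_mx_connected m_gt0 n_gt0 hV det_ne0.
move=> /exists_circuitP/(struct_mx_det0P m_gt0 n_gt0 hV)/eqP.
by rewrite (negbTE det_ne0).
Qed.
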